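(* Let $m\ge1$, $k\ge1$, $r>0$ and let $F:\mathbb{R}^{m+1}\to\mathbb{R}^{n+1}$ be a harmonic form of degree $k$ (each component is a harmonic homogeneous polynomial of degree $k$, i.e. $\Delta^0F=0$) with $|F(\bar x)|^2=r^2|\bar x|^{2k}$ for all $\bar x$, so that $F$ restricts to a map $\varphi:\mathbb{S}^m\to\mathbb{S}^n(r)$. Then at every point of $\mathbb{S}^m$, $$\Delta^0\big(|d^0F|^2\big)=-2r^2k(k-1)(m+2k-1)(m+2k-3),$$ $$|\nabla^0 d^0F|^2=r^2k(k-1)\big(m^2-4m+3+4k(m-2)+4k^2\big).$$
   Context: $\mathbb{S}^m$ is the unit sphere in $\mathbb{R}^{m+1}$ and $\mathbb{S}^n(r)$ the sphere of radius $r$ centred at $0$ in $\mathbb{R}^{n+1}$. Operators on $\mathbb{R}^{m+1}$: $\Delta^0 f=-\sum_i\partial^2 f/\partial(x^i)^2$ (applied componentwise to vector functions); $|d^0F|^2=\sum_{i=1}^{m+1}|\partial F/\partial x^i|^2$; $|\nabla^0d^0F|^2=\sum_{i,j=1}^{m+1}|\partial^2F/\partial x^i\partial x^j|^2$. *)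

From HB Require Import structures.
From mathcomp Require Import all_boot all_order all_algebra.
From mathcomp Require Import reals.
From mathcomp Require Import mpoly.
Set Implicit Arguments. Unset Strict Implicit. Unset Printing Implicit Defensive.
Import Order.TTheory GRing.Theory Num.Theory.
Local Open Scope ring_scope.

(* Euclidean Laplacian (positive, i.e. sum of second derivatives) of a
   polynomial in the m+1 variables x^1..x^{m+1}; the paper's
   Delta^0 f = - mlap f. *)
Definition mlap {R : comRingType} {m : nat} (p : {mpoly R[m]}) : {mpoly R[m]} :=
  \sum_(i < m) (p^`M(i))^`M(i).

Definition dF2 {R : comRingType} {m n : nat} (F : 'I_n -> {mpoly R[m]}) : {mpoly R[m]} :=
  \sum_(j < n) \sum_(i < m) ((F j)^`M(i)) ^+ 2.

Definition hessF2 {R : comRingType} {m n : nat} (F : 'I_n -> {mpoly R[m]})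
  (x : 'I_m -> R) : R :=
  \sum_(j < n) \sum_(i < m) \sum_(l < m) (((F j)^`M(i))^`M(l)).@[x] ^+ 2.

From HB Require Import structures.
From mathcomp Require Import all_boot all_order all_algebra.
From mathcomp Require Import reals.
From mathcomp Require Import mpoly.
From mathcomp Require Import ring.
Set Implicit Arguments. Unset Strict Implicit. Unset Printing Implicit Defensive.
Import GRing.Theory Num.Theory.
Local Open Scope ring_scope.

(* The polynomial |F|^2 - r^2 |x|^(2k) vanishes at every point, hence is zero:
   sum_j F_j^2 = r^2 rho^k with rho = |x|^2.  For a harmonic p one has
   mlap (p^2) = 2 |grad p|^2; applied to the F_j and to their partial
   derivatives (harmonic again) this gives mlap |F|^2 = 2 |dF|^2 and
   mlap |dF|^2 = 2 |Hess F|^2.  So 4 |Hess F|^2 = r^2 mlap (mlap rho^k), and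
   applying mlap rho^k = 2k (2k + m - 1) rho^(k-1) (in m+1 variables) twice
   gives the values on the unit sphere, where rho = 1. *)

Lemma poly_horner_eq0 (R : numDomainType) (q : {poly R}) :
  (forall t, q.[t] = 0) -> q = 0.
Proof.
move=> q0; apply: (@roots_geq_poly_eq0 _ _ [seq i%:R | i <- iota 0 (size q)]).
- by apply/allP => t /mapP [i _ ->]; rewrite /root q0.
- by rewrite map_inj_uniq ?iota_uniq // => i j /eqP; rewrite eqr_nat => /eqP.
- by rewrite size_map size_iota.
Qed.

Section LastVariable.
Variables (R : comNzRingType) (n : nat).
Implicit Types (p : {mpoly R[n.+1]}) (mu : 'X_{1..n.+1}).

Definition mext (x : 'I_n -> R) (t : R) (i : 'I_n.+1) : R :=
  if unlift ord_max i is Some j then x j else t.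

Definition mtail (mu : 'X_{1..n.+1}) : 'X_{1..n} :=
  [multinom mu (lift ord_max i) | i < n].

(* p = sum_d mslice p d * 'X_ord_max ^+ d: the coefficients of p as a
   polynomial in its last variable. *)
Definition mslice (p : {mpoly R[n.+1]}) (d : nat) : {mpoly R[n]} :=
  \sum_(mu <- msupp p | mu ord_max == d) p@_mu *: 'X_[mtail mu].

Lemma eq_mtail (mu nu : 'X_{1..n.+1}) :
  mu ord_max = nu ord_max -> mtail mu = mtail nu -> mu = nu.
Proof.
move=> eq_max /mnmP eq_tail; apply/mnmP => i.
case: (unliftP ord_max i) => [j ->|->] //.
by have := eq_tail j; rewrite !mnmE.
Qed.

Lemma mcoeff_mslice p mu : (mslice p (mu ord_max))@_(mtail mu) = p@_mu.
Proof.
rewrite /mslice raddf_sum big_mkcond /=.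
have coeff_nu nu : nu != mu ->
    (if nu ord_max == mu ord_max then (p@_nu *: 'X_[mtail nu])@_(mtail mu) else 0)
    = 0.
  move=> nu_mu; case: eqP => // eq_max; rewrite mcoeffZ mcoeffX.
  case: eqP => [eq_tail|]; last by rewrite mulr0.
  by rewrite (eq_mtail eq_max eq_tail) eqxx in nu_mu.
have [mu_p|mu_notp] := boolP (mu \in msupp p).
  rewrite (bigD1_seq mu) ?msupp_uniq //= eqxx mcoeffZ mcoeffX eqxx mulr1.
  by rewrite big1 ?addr0 // => nu; apply: coeff_nu.
rewrite big1_seq => [|nu /andP [_ nu_p]]; last first.
  by apply: coeff_nu; apply: contraNneq mu_notp => <-.
by apply/esym/eqP; rewrite mcoeff_eq0.
Qed.

Lemma msupp_max_lt p mu : mu \in msupp p -> (mu ord_max < msize p)%N.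
Proof.
move=> mu_p; apply: leq_ltn_trans (msize_mdeg_lt mu_p).
by rewrite mdegE (bigD1 ord_max) //= leq_addr.
Qed.

Lemma meval_mext p x t :
  p.@[mext x t] = \sum_(d < msize p) (mslice p d).@[x] * t ^+ d.
Proof.
have mext_monomial (mu : 'X_{1..n.+1}) :
    \prod_(i < n.+1) mext x t i ^+ mu i
    = \prod_(i < n) x i ^+ mtail mu i * t ^+ mu ord_max.
  rewrite big_ord_recr /= /mext unlift_none; congr (_ * _).
  apply: eq_bigr => i _; rewrite mnmE.
  suff -> : widen_ord (leqnSn n) i = lift ord_max i by rewrite liftK.
  by apply: val_inj; exact: (esym (lift_max i)).
under [RHS]eq_bigr do rewrite raddf_sum mulr_suml.
rewrite mevalE (exchange_big_dep xpredT) //=; apply: eq_big_seq => mu mu_p.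
rewrite (big_pred1 (Ordinal (msupp_max_lt mu_p))) => [|d]; last first.
  by rewrite /= -val_eqE eq_sym.
by rewrite mevalZ mevalX mext_monomial mulrA.
Qed.

End LastVariable.

Lemma mpoly_meval_eq0 (R : numDomainType) n (p : {mpoly R[n]}) :
  (forall x, p.@[x] = 0) -> p = 0.
Proof.
elim: n p => [|n IH] p p0.
  have := p0 (fun=> 0); rewrite (nvar0_mpolyC p) mevalC => ->.
  exact: mpolyC0.
have slice0 d : (d < msize p)%N -> mslice p d = 0.
  move=> lt_d; apply: IH => x.
  pose q := \poly_(d < msize p) (mslice p d).@[x].
  have q0 : q = 0 by apply: poly_horner_eq0 => t; rewrite horner_poly -meval_mext.
  by have := congr1 (fun q : {poly R} => q`_d) q0; rewrite coef_poly lt_d coef0.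
apply/mpolyP => mu; rewrite mcoeff0.
have [mu_p|] := boolP (mu \in msupp p); last by rewrite -mcoeff_eq0 => /eqP.
by rewrite -mcoeff_mslice slice0 ?mcoeff0 ?msupp_max_lt.
Qed.

Lemma mpoly_meval_inj (R : numDomainType) n (p q : {mpoly R[n]}) :
  (forall x, p.@[x] = q.@[x]) -> p = q.
Proof.
move=> pq; apply/eqP; rewrite -subr_eq0; apply/eqP/mpoly_meval_eq0 => x.
by rewrite mevalB pq subrr.
Qed.

Section Laplacian.
Variables (R : comNzRingType) (N : nat).
Implicit Types p q : {mpoly R[N]}.

Lemma mlap_is_linear : linear (@mlap R N).
Proof.
move=> c p q; rewrite /mlap scaler_sumr -big_split /=.
by apply: eq_bigr => i _; rewrite !linearP.
Qed.

HB.instance Definition _ :=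
  GRing.isLinear.Build R {mpoly R[N]} {mpoly R[N]} _ (@mlap R N) mlap_is_linear.

Lemma mderivXU (i j : 'I_N) : ('X_i : {mpoly R[N]})^`M(j) = (i == j)%:R.
Proof.
rewrite mderivX mnm1E; case: eqP => [->|_]; last by rewrite scale0r.
by rewrite scale1r -{1}[U_(j)%MM]add0m addmK mpolyX0.
Qed.

Lemma mderiv1 i : (1 : {mpoly R[N]})^`M(i) = 0.
Proof. by rewrite -mpolyC1 mderivC. Qed.

Lemma mderivXn i p k : (p ^+ k)^`M(i) = p^`M(i) * p ^+ k.-1 *+ k.
Proof.
elim: k => [|k IH]; first by rewrite expr0 mderiv1 mulr0n.
rewrite exprS mderivM IH; case: k {IH} => [|k]; first by rewrite !expr0 mulr0n; ring.
rewrite exprS; ring.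
Qed.

Lemma mlapM p q : mlap (p * q) =
  mlap p * q + (\sum_i p^`M(i) * q^`M(i)) *+ 2 + p * mlap q.
Proof.
rewrite /mlap mulr_suml mulr_sumr -sumrMnl -!big_split /=.
by apply: eq_bigr => i _; rewrite !(mderivM, mderivD) mulr2n !addrA.
Qed.

Lemma mlap_mderiv i p : mlap (p^`M(i)) = (mlap p)^`M(i).
Proof.
rewrite /mlap raddf_sum; apply: eq_bigr => l _.
by rewrite (mderiv_comm i l) (mderiv_comm i l).
Qed.

Lemma mlap_sqr p : mlap p = 0 -> mlap (p ^+ 2) = (\sum_i p^`M(i) ^+ 2) *+ 2.
Proof.
move=> harm_p; rewrite expr2 mlapM harm_p mul0r mulr0 add0r addr0.
by under eq_bigr do rewrite -expr2.
Qed.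

Definition msqnorm : {mpoly R[N]} := \sum_(i < N) 'X_i ^+ 2.

Lemma mderiv_msqnorm i : msqnorm^`M(i) = 'X_i *+ 2.
Proof.
rewrite raddf_sum (bigD1 i) //= big1 => [|l /negPf nli].
  by rewrite addr0 mderivXn mderivXU eqxx /= mul1r expr1.
by rewrite mderivXn mderivXU nli mul0r mul0rn.
Qed.

Lemma mderiv_msqnormX i k :
  (msqnorm ^+ k)^`M(i) = 'X_i * msqnorm ^+ k.-1 *+ (2 * k).
Proof. by rewrite mderivXn mderiv_msqnorm mulrnAl -mulrnA mulnC. Qed.

Lemma msqnorm_euler k :
  \sum_i 'X_i * (msqnorm ^+ k)^`M(i) = msqnorm ^+ k *+ (2 * k).
Proof.
under eq_bigr do rewrite mderiv_msqnormX mulrnAr mulrA -expr2.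
rewrite sumrMnl -mulr_suml; case: k => [|k]; first by rewrite !mulr0n.
by rewrite -exprS.
Qed.

Lemma mlap_msqnormX k :
  mlap (msqnorm ^+ k) = msqnorm ^+ k.-1 *+ (2 * k * (2 * k.-1 + N)).
Proof.
rewrite /mlap; under eq_bigr do
  rewrite mderiv_msqnormX mderivMn mderivM mderivXU eqxx mul1r.
rewrite sumrMnl big_split /= msqnorm_euler sumr_const card_ord.
by rewrite -mulrnDr -mulrnA mulnC addnC.
Qed.

End Laplacian.

Lemma meval_msqnorm (R : comNzRingType) N (x : 'I_N -> R) :
  (msqnorm R N).@[x] = \sum_(i < N) x i ^+ 2.
Proof.
rewrite /msqnorm raddf_sum; apply: eq_bigr => i _ /=.
by rewrite rmorphXn /= mevalXU.
Qed.

Lemma meval_mlap2_msqnormX (R : comNzRingType) N k (x : 'I_N -> R) :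
  \sum_(i < N) x i ^+ 2 = 1 ->
  (mlap (mlap (msqnorm R N ^+ k))).@[x]
    = 4 * k%:R * (k%:R - 1) * (2 * k%:R + N%:R - 2) * (2 * k%:R + N%:R - 4).
Proof.
move=> x_unit; rewrite mlap_msqnormX raddfMn /= mlap_msqnormX -mulrnA.
rewrite mevalMn rmorphXn /= meval_msqnorm x_unit expr1n.
by case: k => [|[|k]] /=; ring.
Qed.

Section HarmonicMaps.
Variables (R : comNzRingType) (m n : nat) (F : 'I_n -> {mpoly R[m]}).
Hypothesis harmF : forall j, mlap (F j) = 0.

Lemma mlap_sum_sqr : mlap (\sum_j F j ^+ 2) = dF2 F *+ 2.
Proof.
by rewrite raddf_sum -sumrMnl; apply: eq_bigr => j _ /=; rewrite mlap_sqr.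
Qed.

Lemma mlap_dF2 :
  mlap (dF2 F) = (\sum_j \sum_i \sum_l ((F j)^`M(i))^`M(l) ^+ 2) *+ 2.
Proof.
rewrite raddf_sum -sumrMnl; apply: eq_bigr => j _.
rewrite raddf_sum -sumrMnl; apply: eq_bigr => i _ /=.
by rewrite mlap_sqr // mlap_mderiv harmF mderiv0.
Qed.

Lemma meval_mlap_dF2 x : (mlap (dF2 F)).@[x] = hessF2 F x *+ 2.
Proof.
rewrite mlap_dF2 mevalMn rmorph_sum; congr (_ *+ 2); apply: eq_bigr => j _.
rewrite rmorph_sum; apply: eq_bigr => i _.
by rewrite rmorph_sum; apply: eq_bigr => l _; rewrite rmorphXn.
Qed.

End HarmonicMaps.

Theorem mainTheorem2 (R : realType) (m n k : nat) (r : R)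
  (F : 'I_n.+1 -> {mpoly R[m.+1]}) :
  (1 <= m)%N -> (1 <= k)%N -> 0 < r ->
  (forall j, F j \is k.-homog) ->
  (forall j, mlap (F j) = 0) ->
  (forall x : 'I_m.+1 -> R,
     \sum_(j < n.+1) ((F j).@[x]) ^+ 2 = r ^+ 2 * (\sum_(i < m.+1) x i ^+ 2) ^+ k) ->
  forall x : 'I_m.+1 -> R, \sum_(i < m.+1) x i ^+ 2 = 1 ->
    (- mlap (dF2 F)).@[x]
      = - 2 * r ^+ 2 * k%:R * (k%:R - 1) * (m%:R + 2 * k%:R - 1) * (m%:R + 2 * k%:R - 3)
    /\ hessF2 F x
      = r ^+ 2 * k%:R * (k%:R - 1)
        * (m%:R ^+ 2 - 4 * m%:R + 3 + 4 * k%:R * (m%:R - 2) + 4 * k%:R ^+ 2).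
Proof.
move=> _ _ _ _ harmF sphereF x x_unit.
have sum_sqrF : \sum_j F j ^+ 2 = r ^+ 2 *: msqnorm R m.+1 ^+ k.
  apply: mpoly_meval_inj => y.
  rewrite rmorph_sum mevalZ rmorphXn /= meval_msqnorm -sphereF.
  by apply: eq_bigr => j _; rewrite rmorphXn.
have bilap : mlap (dF2 F) *+ 2 = r ^+ 2 *: mlap (mlap (msqnorm R m.+1 ^+ k)).
  by rewrite -raddfMn -mlap_sum_sqr // sum_sqrF /= !linearZ.
have hess4 : hessF2 F x *+ 4 = r ^+ 2 * (mlap (mlap (msqnorm R m.+1 ^+ k))).@[x].
  by rewrite -[4%N]/(2 * 2)%N mulrnA -meval_mlap_dF2 // -mevalMn bilap mevalZ.
rewrite meval_mlap2_msqnormX // in hess4.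
have hess_val : hessF2 F x
    = r ^+ 2 * k%:R * (k%:R - 1) * (m%:R + 2 * k%:R - 1) * (m%:R + 2 * k%:R - 3).
  apply: (@mulIf _ 4); first by rewrite pnatr_eq0.
  by rewrite mulr_natr hess4; ring.
by split; rewrite ?mevalN ?meval_mlap_dF2 // hess_val; ring.
Qed.
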